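(* Let $\mathrm{Aut}(\mathcal{NR})$ be the setwise stabiliser of the Nordstrom-Robinson code $\mathcal{NR}$ in $\mathrm{Aut}(\Gamma_{16})=T\rtimes L$, and let $\mu:\mathrm{Aut}(\mathcal{NR})\to S_{16}$ be the homomorphism $g\sigma\mapsto\sigma$ (for $g\in T$, $\sigma\in L$). Then the kernel of $\mu$ equals $T_{\mathcal{R}}=\{\beta\mapsto\beta+\alpha : \alpha\in\mathcal{R}\}$, the group of translations of $\mathbb{F}_2^{16}$ by elements of $\mathcal{R}$.
   Context: $\Gamma_{16}$ is the binary Hamming graph on $\mathbb{F}_2^{16}$; $\mathrm{Aut}(\Gamma_{16})=T\rtimes L$, where $T$ is the group of translations of $\mathbb{F}_2^{16}$ and $L\cong S_{16}$ is the group of coordinate permutations. Let $\mathcal{G}$ be the $[24,12,8]$ extended binary Golay code in $\mathbb{F}_2^{24}$, chosen so that $(1^8,0^{16})\in\mathcal{G}$. Let $J^*=\{1,\dots,8\}$, $J=\{9,\dots,24\}$, $\mathcal{D}^0=\{\alpha\in\mathcal{G}:\mathrm{supp}(\alpha)\cap J^*=\emptyset\}$ and, for $1\le i\le 7$, $\mathcal{D}^i=\{\alpha\in\mathcal{G}:\mathrm{supp}(\alpha)\cap J^*=\{i,8\}\}$. The Nordstrom-Robinson code $\mathcal{NR}\subseteq\mathbb{F}_2^{16}$ is the set of restrictions to the coordinates in $J$ of the vectors in $\bigcup_{i=0}^7\mathcal{D}^i$, and $\mathcal{R}\subseteq\mathcal{NR}$ is the set of restrictions to $J$ of the vectors in $\mathcal{D}^0$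 (this is the Reed–Muller code $R(1,4)$). *)

From mathcomp Require Import all_boot all_order all_algebra all_fingroup.
Set Implicit Arguments. Unset Strict Implicit. Unset Printing Implicit Defensive.
Import GRing.Theory.
Local Open Scope ring_scope.

(* Vectors of F_2^n are row vectors 'rV['F_2]_n.  Coordinate k (1-based in the
   paper) is the ordinal k-1.  J* = {1..8} = ordinals 0..7, J = {9..24} = 8..23. *)

Definition wt n (x : 'rV['F_2]_n) : nat := #|[set j | x 0 j != 0]|.

(* A [24,12,8] binary linear code (extended Golay code):
   an F_2-linear subspace (contains 0 and closed under +; over F_2 this is
   linearity) of size 2^12 (dimension 12) with minimum distance 8
   (every nonzero word has weight >= 8 and some nonzero word has weight 8). *)
Definition is_golay (C : {set 'rV['F_2]_24}) : Prop :=
  [/\ (0 : 'rV['F_2]_24) \in C,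
      {in C &, forall x y, x + y \in C},
      #|C| = (2 ^ 12)%N,
      {in C, forall x, x != 0 -> (8 <= wt x)%N} &
      exists2 x, x \in C & wt x = 8%N].

Definition e8 : 'rV['F_2]_24 := \row_(i < 24) (if (i < 8)%N then 1 else 0).

Definition inD0 (v : 'rV['F_2]_24) : bool :=
  [forall i : 'I_24, (i < 8)%N ==> (v 0 i == 0)].

(* D^i for i = k+1, k : 'I_7 : support meets J* exactly in {i, 8}
   (0-based ordinals k and 7). *)
Definition inDi (k : 'I_7) (v : 'rV['F_2]_24) : bool :=
  [forall i : 'I_24, (i < 8)%N ==>
     (v 0 i == (if (val i == val k) || (val i == 7%N) then 1 else 0))].

Definition colJ (j : 'I_16) : 'I_24 := rshift 8 j.
Definition restrJ (v : 'rV['F_2]_24) : 'rV['F_2]_16 := \row_(j < 16) v 0 (colJ j).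

Definition NR (C : {set 'rV['F_2]_24}) : {set 'rV['F_2]_16} :=
  [set restrJ v | v in [set v in C | inD0 v || [exists k : 'I_7, inDi k v]]].
Definition RM (C : {set 'rV['F_2]_24}) : {set 'rV['F_2]_16} :=
  [set restrJ v | v in [set v in C | inD0 v]].

(* Aut(Gamma_16) = T x| L : an element g sigma (g the translation by a,
   sigma in L = S_16) is encoded as the pair (a, sigma); it acts by
   x |-> (x with coordinates permuted by sigma) + a.  This encoding is
   bijective (each element of T L factors uniquely). *)
Definition autG16 := ('rV['F_2]_16 * 'S_16)%type.
Definition act (p : autG16) (x : 'rV['F_2]_16) : 'rV['F_2]_16 :=
  col_perm p.2 x + p.1.

Definition inAutNR (C : {set 'rV['F_2]_24}) (p : autG16) : bool :=
  [set act p x | x in NR C] == NR C.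

Definition mu (p : autG16) : 'S_16 := p.2.

Definition kerMu (C : {set 'rV['F_2]_24}) : {set autG16} :=
  [set p | inAutNR C p & mu p == 1%g].

Definition T_R (C : {set 'rV['F_2]_24}) : {set autG16} :=
  [set ((a, 1%g) : autG16) | a in RM C].

(* An element (a, s) of Aut(NR) lies in the kernel of mu iff s = 1, so the
   theorem says that translation by a stabilises NR exactly when a is in R.
   If a comes from D^0, adding it maps D^0 and each D^i into itself.
   Conversely a lies in NR (as 0 does); if it came from some D^k, take a
   codeword w of D^i with i <> k: the translate of w|_J by a would come from a
   codeword u, and u + w + (the word of a) is a codeword vanishing on J whose
   trace on J* is neither 0 nor 1^8, contradicting minimum weight 8.  The
   words of D^i exist because every 4-subset of J* is the trace of a codeword,
   which follows from the covering radius of the code punctured at a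
   coordinate of J. *)

From Pilot Require Import Defs.
From mathcomp Require Import all_boot all_order all_algebra all_fingroup zify.
Set Implicit Arguments. Unset Strict Implicit. Unset Printing Implicit Defensive.
Import GRing.Theory.
Local Open Scope ring_scope.

Lemma F2_addrr (a : 'F_2) : a + a = 0.
Proof. exact/addrr_pchar2/pchar_Fp. Qed.

Section BinaryVectors.

Variable n : nat.
Implicit Types x y z : 'rV['F_2]_n.

Lemma addvv x : x + x = 0.
Proof. by apply/rowP => j; rewrite !mxE F2_addrr. Qed.

Lemma addvK y : involutive (+%R^~ y).
Proof. by move=> x; rewrite -addrA addvv addr0. Qed.

Lemma addv_move x y z : x + y = z -> x = z + y.
Proof. by move=> <-; rewrite addvK. Qed.

Lemma wtE x : wt x = (\sum_j (x 0 j != 0)%R)%N.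
Proof. by rewrite /wt -sum1dep_card big_mkcond. Qed.

Lemma wt_eq0 x : (wt x == 0%N) = (x == 0).
Proof.
rewrite wtE sum_nat_eq0; apply/forallP/eqP => [x0 | -> j].
  by apply/rowP => j; rewrite mxE; move: (x0 j); rewrite eqb0 negbK => /eqP.
by rewrite mxE eqxx.
Qed.

Lemma wtD x y : (wt (x + y) <= wt x + wt y)%N.
Proof.
rewrite !wtE -big_split leq_sum // => j _; rewrite mxE.
by case: (x 0 j) => [[|[|?]] ?]; case: (y 0 j) => [[|[|?]] ?].
Qed.

Lemma wt_addN1 x : wt (x + const_mx 1) = (n - wt x)%N.
Proof.
transitivity (#|'I_n| - wt x)%N; last by rewrite card_ord.
rewrite -(cardsC [set j | x 0 j != 0]) addKn; apply: eq_card => j.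
by rewrite !inE !mxE; case: (x 0 j) => [[|[|?]] ?].
Qed.

Lemma wt_le x : (wt x <= n)%N.
Proof. by rewrite -[n in (_ <= n)%N]card_ord max_card. Qed.

Lemma wt0 : wt (0 : 'rV['F_2]_n) = 0%N.
Proof. by apply/eqP; rewrite wt_eq0. Qed.

Definition indic (A : {set 'I_n}) : 'rV['F_2]_n := \row_j (j \in A)%:R.

Lemma wt_indic A : wt (indic A) = #|A|.
Proof. by apply: eq_card => j; rewrite !inE mxE; case: (j \in A). Qed.

End BinaryVectors.

Lemma wt_row_mx m n (a : 'rV['F_2]_m) (b : 'rV['F_2]_n) :
  wt (row_mx a b) = (wt a + wt b)%N.
Proof.
by rewrite !wtE big_split_ord; congr (_ + _)%N; apply: eq_bigr => j _;
  rewrite (row_mxEl, row_mxEr).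
Qed.

Lemma card_subsets_lt (T : finType) k :
  #|[set A : {set T} | (#|A| < k)%N]| = (\sum_(i < k) 'C(#|T|, i))%N.
Proof.
elim: k => [|k IHk].
  by rewrite big_ord0; apply/eqP; rewrite cards_eq0; apply/eqP/setP => A; rewrite !inE.
rewrite big_ord_recr /= -IHk -card_draws -cardsUI.
have -> : [set A : {set T} | (#|A| < k)%N] :&: [set A : {set T} | #|A| == k] = set0.
  by apply/setP => A; rewrite !inE; case: ltngtP.
by rewrite cards0 addn0; apply: eq_card => A; rewrite !inE ltnS leq_eqVlt orbC.
Qed.

Lemma exists_subset_card (T : finType) (A : {set T}) k :
  (k <= #|A|)%N -> exists2 B : {set T}, B \subset A & #|B| = k.
Proof.
move=> le_kA; exists [set x in take k (enum A)].
  by apply/subsetP => x; rewrite inE => /mem_take; rewrite mem_enum.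
rewrite cardsE (card_uniqP _) ?take_uniq ?enum_uniq //.
by rewrite size_takel // -cardE.
Qed.

Lemma exists_ord_notin n (s : seq 'I_n) : (size s < n)%N -> exists j, j \notin s.
Proof.
move=> lt_s_n; apply/existsP; rewrite -negb_forall; apply: contraTN lt_s_n.
move=> /forallP s_full; rewrite -leqNgt -[n in (n <= _)%N]card_ord.
apply: leq_trans (card_size s); apply: subset_leq_card.
by apply/subsetP => j _; apply: s_full.
Qed.

Definition ball3 (t : 'I_24) : {set 'rV['F_2]_24} :=
  [set indic (lift t @: A) | A : {set 'I_23} in [set A : {set 'I_23} | (#|A| < 4)%N]].

Lemma card_ball3 t : #|ball3 t| = (2 ^ 11)%N.
Proof.
rewrite card_in_imset; last first.
  by move=> A B _ _ /rowP eqAB; apply/(imset_inj (@lift_inj _ t))/setP => j;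
     move: (eqAB j); rewrite !mxE; do 2 case: (j \in _).
by rewrite card_subsets_lt card_ord !big_ord_recr big_ord0.
Qed.

Lemma ball3P t e : e \in ball3 t -> e 0 t = 0 /\ (wt e <= 3)%N.
Proof.
case/imsetP => A; rewrite inE => ltA4 ->; split.
  by rewrite mxE; case: imsetP => // -[j _ eq_t]; move: (neq_lift t j); rewrite -eq_t eqxx.
by rewrite (wt_indic (lift t @: A)) card_imset //; apply: lift_inj.
Qed.

Definition restrJst (v : 'rV['F_2]_24) : 'rV['F_2]_8 := lsubmx (v : 'rV_(8 + 16)).

Lemma restrJE v : restrJ v = rsubmx (v : 'rV_(8 + 16)).
Proof. by apply/rowP => j; rewrite !mxE. Qed.

Lemma restrJstD u v : restrJst (u + v) = restrJst u + restrJst v.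
Proof. by apply/rowP => j; rewrite !mxE. Qed.

Lemma restrJD u v : restrJ (u + v) = restrJ u + restrJ v.
Proof. by apply/rowP => j; rewrite !mxE. Qed.

Lemma wt_split v : wt v = (wt (restrJst v) + wt (restrJ v))%N.
Proof. by rewrite restrJE -wt_row_mx hsubmxK. Qed.

Lemma restrJst_e8 : restrJst e8 = const_mx 1.
Proof. by apply/rowP => j; rewrite !mxE /= ltn_ord. Qed.

Lemma restrJ_e8 : restrJ e8 = 0.
Proof. by apply/rowP => j; rewrite !mxE. Qed.

Definition pairJst (k : 'I_7) : 'rV['F_2]_8 := indic [set widen_ord (leqnSn 7) k; ord_max].

Lemma forall_Jst (P : 'I_24 -> bool) :
  [forall i : 'I_24, (i < 8)%N ==> P i] = [forall j : 'I_8, P (lshift 16 j)].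
Proof.
apply/forallP/forallP => P_Jst j.
  by move/implyP: (P_Jst (lshift 16 j)); apply; rewrite /= ltn_ord.
apply/implyP => lt_j8.
by have -> : j = lshift 16 (Ordinal lt_j8) by apply: val_inj.
Qed.

Lemma inD0E v : inD0 v = (restrJst v == 0).
Proof.
rewrite /inD0 forall_Jst; apply/forallP/eqP => [v0 | vJ0 j].
  by apply/rowP => j; rewrite !mxE; apply/eqP.
by move/rowP: vJ0 => /(_ j); rewrite !mxE => ->.
Qed.

Lemma inDiE k v : inDi k v = (restrJst v == pairJst k).
Proof.
rewrite /inDi forall_Jst; apply/forallP/eqP => [vk | vJk j].
  by apply/rowP => j; rewrite !mxE !inE; move/eqP: (vk j) => ->; case: ifP.
by move/rowP: vJk => /(_ j); rewrite !mxE !inE => ->; case: ifP.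
Qed.

Section GolayCode.

Variable C : {set 'rV['F_2]_24}.
Hypotheses (golayC : is_golay C) (e8C : e8 \in C).

Lemma golay_add : {in C &, forall x y, x + y \in C}.
Proof. by case: golayC. Qed.

Lemma golay_wt c : c \in C -> c != 0 -> (8 <= wt c)%N.
Proof. by case: golayC => _ _ _ + _; apply. Qed.

Lemma golay_eq c c' e e' : c \in C -> c' \in C ->
  (wt e + wt e' < 8)%N -> c + e = c' + e' -> c = c'.
Proof.
move=> cC c'C lt_ee' /addv_move eq_c; apply/eqP; apply: contraTT lt_ee'.
rewrite -leqNgt => ne_cc'; apply: leq_trans (wtD e e').
have -> : e + e' = c + c' by rewrite eq_c addrAC (addrAC c') addvv add0r addrC.
apply: golay_wt (golay_add cC c'C) _.
by apply: contraNneq ne_cc' => /addv_move; rewrite add0r => ->.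
Qed.

(* The translates [C + ball3 t] and [C + ball3 t + indic [set t]] are disjoint
   and each of size [2^12 * 2^11 = 2^23], so together they fill [F_2^24]. *)
Lemma golay_cover t y : exists c f, [/\ c \in C, y = c + f, (wt f <= 4)%N &
  (wt f <= 3)%N \/ f 0 t = 1].
Proof.
have [_ _ cardC _ _] := golayC.
pose et := indic [set t]; pose S := [set p.1 + p.2 | p in setX C (ball3 t)].
have wt_et : wt et = 1%N by rewrite wt_indic cards1.
have et_t : et 0 t = 1 by rewrite mxE set11.
have cardS : #|S| = (2 ^ 12 * 2 ^ 11)%N.
  rewrite card_in_imset ?cardsX ?cardC ?card_ball3 //.
  move=> [c e] [c' e'] /setXP[cC /ball3P[_ e3]] /setXP[c'C /ball3P[_ e'3]] /= eq_ce.
  have eq_cc' : c = c' by apply: golay_eq eq_ce; rewrite //; lia.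
  by move: eq_ce; rewrite eq_cc' => /addrI ->.
have disjS : [disjoint S & [set s + et | s in S]].
  apply/pred0P => z /=; apply/negbTE/negP => /andP[/imsetP[[c e] /setXP[cC eB] ->]].
  case/imsetP=> _ /imsetP[[c' e'] /setXP[c'C e'B] ->] /=; rewrite -addrA => eq_ce.
  have [e0 e3] := ball3P eB; have [e'0 e'3] := ball3P e'B.
  have eq_cc' : c = c'.
    apply: golay_eq eq_ce => //; have := wtD e' et; rewrite wt_et => le_e'et.
    by apply: leq_ltn_trans (leq_add e3 (leq_trans le_e'et (leq_add e'3 (leqnn 1)))) _.
  move: eq_ce; rewrite eq_cc' => /addrI /rowP /(_ t).
  by rewrite !mxE e0 e'0 set11 add0r.
have : y \in S :|: [set s + et | s in S].
  suff -> : S :|: [set s + et | s in S] = setT by rewrite in_setT.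
  apply/eqP; rewrite eqEcard subsetT cardsT card_mx card_Fp //.
  rewrite cardsU (disjoint_setI0 disjS) cards0 subn0 card_imset; last exact: addIr.
  by rewrite cardS -expnD addnn -mul2n -expnS mul1n leqnn.
case/setUP => [/imsetP[[c e] /setXP[cC /ball3P[_ e3]] ->] |].
  by exists c, e; split; [| | lia | left].
case/imsetP=> _ /imsetP[[c e] /setXP[cC /ball3P[e0 e3]] ->] ->.
exists c, (e + et); split; rewrite ?addrA //.
- by apply: leq_trans (wtD e et) _; rewrite wt_et addn1 ltnS.
- by right; rewrite mxE e0 et_t add0r.
Qed.


Lemma golay_word_on_Jst z : z \in C -> restrJ z = 0 ->
  restrJst z = 0 \/ restrJst z = const_mx 1.
Proof.
move=> zC rz0; case: (eqVneq z 0) => [-> | nz0]; [left | right].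
  by apply/rowP => j; rewrite !mxE.
have := golay_wt zC nz0; rewrite wt_split rz0 wt0 addn0 => wt8.
have z1 : restrJst z + const_mx 1 = 0 by apply/eqP; rewrite -wt_eq0 wt_addN1 subn_eq0.
by rewrite (addv_move z1) add0r.
Qed.

(* Both [c] and [c + e8] have weight at least 8, while their restrictions to
   [J*] are complementary. *)
Lemma golay_wt_restrJ c : c \in C -> restrJ c != 0 -> (4 <= wt (restrJ c))%N.
Proof.
move=> cC rc_n0.
have c_n0 : c != 0 by apply: contraNneq rc_n0 => ->; apply/eqP/rowP => j; rewrite !mxE.
have ce8_n0 : c + e8 != 0.
  apply: contraNneq rc_n0 => /(congr1 restrJ); rewrite restrJD restrJ_e8 addr0 => ->.
  by apply/eqP/rowP => j; rewrite !mxE.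
have := golay_wt cC c_n0; have := golay_wt (golay_add cC e8C) ce8_n0.
rewrite !wt_split restrJstD restrJD restrJst_e8 restrJ_e8 addr0 wt_addN1.
by have := wt_le (restrJst c); lia.
Qed.

(* Puncture at a coordinate [t] of [J] and take a codeword [c] at distance at
   most 4 from [y = (1_T, 0)]; the weight bounds force [c] to agree with [y] on [J*]. *)
Lemma golay_octad (T : {set 'I_8}) : #|T| = 4%N -> exists2 c, c \in C & restrJst c = indic T.
Proof.
move=> T4; pose y : 'rV['F_2]_24 := row_mx (indic T) (0 : 'rV['F_2]_16).
pose t : 'I_24 := rshift 8 (ord0 : 'I_16).
have [c [f [cC y_cf f4 f3_or_ft]]] := golay_cover t y.
have restrJst_y : restrJst y = indic T by rewrite /restrJst row_mxKl.
have restrJ_y : restrJ y = 0 by rewrite restrJE row_mxKr.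
have f_yc : f = y + c by rewrite y_cf (addrC c) addvK.
have rf : restrJ f = restrJ c by rewrite f_yc restrJD restrJ_y add0r.
exists c => //; case: (eqVneq (restrJ c) 0) => [rc0 | rc_n0].
  have wt_f : wt f = 4%N.
    rewrite wt_split rf rc0 wt0 addn0 f_yc restrJstD restrJst_y.
    case: (golay_word_on_Jst cC rc0) => ->; first by rewrite addr0 wt_indic.
    by rewrite wt_addN1 wt_indic T4.
  have ft : f 0 t = 0 by move/rowP: rf => /(_ ord0); rewrite rc0 !mxE.
  by case: f3_or_ft; rewrite ?wt_f ?ft.
have := golay_wt_restrJ cC rc_n0; rewrite -rf => r4.
have : wt (restrJst f) == 0%N by apply/eqP; have := wt_split f; lia.
by rewrite wt_eq0 (addv_move (esym y_cf)) restrJstD restrJst_y => /eqP ->; rewrite addr0.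
Qed.

Lemma golay_pair (p q : 'I_8) : p != q ->
  exists2 c, c \in C & restrJst c = indic [set p; q].
Proof.
move=> neq_pq.
have [R sub_R R3] : exists2 R : {set 'I_8}, R \subset ~: [set p; q] & #|R| = 3%N.
  apply: exists_subset_card.
  by have := cardsC [set p; q]; rewrite cards2 neq_pq card_ord -(ltn_add2l 2) => ->.
have notin_R x : x \in [set p; q] -> x \notin R.
  by move=> xpq; apply: contraL xpq => /(subsetP sub_R); rewrite inE.
have card4 x : x \in [set p; q] -> #|x |: R| = 4%N by move/notin_R; rewrite cardsU1 R3 => ->.
have [c1 c1C c1pR] := golay_octad (card4 p (set21 p q)).
have [c2 c2C c2qR] := golay_octad (card4 q (set22 p q)).
exists (c1 + c2); first exact: golay_add.
rewrite restrJstD c1pR c2qR; apply/rowP => j; rewrite !mxE !inE.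
have := notin_R j; rewrite !inE.
case: (eqVneq j p) => [jp | _]; case: (eqVneq j q) => [jq | _]; case: (j \in R) => //=.
all: try by move: neq_pq; rewrite -jp -jq eqxx.
all: try by move/(_ isT).
all: by move=> _; rewrite ?addr0 ?add0r ?F2_addrr.
Qed.

Lemma pairJst_widen k j : pairJst k 0 (widen_ord (leqnSn 7) j) = (j == k)%:R.
Proof.
by rewrite mxE !inE -[_ == ord_max]/(val j == 7%N) (ltn_eqF (ltn_ord j)) orbF.
Qed.

Lemma pairJst_max k : pairJst k 0 ord_max = 1.
Proof. by rewrite mxE !inE eqxx orbT. Qed.

Lemma golay_pairJst k : exists2 w, w \in C & restrJst w = pairJst k.
Proof. by apply: golay_pair; rewrite -(inj_eq val_inj) /= ltn_eqF. Qed.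

Lemma restrJD_pairJst_notin_NR (i k : 'I_7) v w : i != k -> v \in C -> w \in C ->
  restrJst v = pairJst k -> restrJst w = pairJst i -> restrJ w + restrJ v \notin NR C.
Proof.
move=> neq_ik vC wC vk wi; apply/negP => /imsetP[u]; rewrite inE => /andP[uC u_NR] eq_u.
pose z := u + (w + v).
have zC : z \in C by rewrite !golay_add.
have rz0 : restrJ z = 0 by rewrite !restrJD -eq_u addvv.
have z_const j j' : restrJst z 0 j = restrJst z 0 j'.
  by case: (golay_word_on_Jst zC rz0) => ->; rewrite !mxE.
have zJ j : restrJst z 0 j = restrJst u 0 j + (pairJst i 0 j + pairJst k 0 j).
  by rewrite !restrJstD wi vk !mxE.
case/orP: u_NR => [| /existsP[m]]; [rewrite inD0E => /eqP u0 | rewrite inDiE => /eqP um].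
  move: (z_const (widen_ord (leqnSn 7) i) ord_max).
  by rewrite !zJ u0 !pairJst_widen !pairJst_max eqxx (negbTE neq_ik) !mxE add0r addr0 F2_addrr.
have [j0] := exists_ord_notin (s := [:: i; k; m]) isT.
rewrite !inE !negb_or => /and3P[/negbTE j0i /negbTE j0k /negbTE j0m].
move: (z_const ord_max (widen_ord (leqnSn 7) j0)).
by rewrite !zJ um !pairJst_widen !pairJst_max j0i j0k j0m F2_addrr !addr0.
Qed.

Lemma RM_add_NR a x : a \in RM C -> x \in NR C -> x + a \in NR C.
Proof.
case/imsetP => v; rewrite inE inD0E => /andP[vC /eqP v0] ->.
case/imsetP => w; rewrite inE => /andP[wC w_NR] ->.
apply/imsetP; exists (w + v); last by rewrite restrJD.
have eqJ : restrJst (w + v) = restrJst w by rewrite restrJstD v0 addr0.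
rewrite inE golay_add //= inD0E eqJ -inD0E.
suff -> : [exists k, inDi k (w + v)] = [exists k, inDi k w] by [].
by apply: eq_existsb => k; rewrite !inDiE eqJ.
Qed.

Lemma NR_translate_stable a : ([set x + a | x in NR C] == NR C) = (a \in RM C).
Proof.
apply/eqP/idP => [stab | aRM]; last first.
  apply/eqP; rewrite eqEcard (card_imset (NR C) (addIr a)).
  by rewrite leqnn andbT; apply/subsetP => _ /imsetP[x xNR ->]; apply: RM_add_NR.
have [C0 _ _ _ _] := golayC.
have : a \in NR C.
  rewrite -stab; apply/imsetP; exists 0; last by rewrite add0r.
  apply/imsetP; exists 0; last by apply/rowP => j; rewrite !mxE.
  by rewrite inE C0 inD0E; apply/orP; left; apply/eqP/rowP => j; rewrite !mxE.
case/imsetP => v; rewrite inE => /andP[vC v_NR] a_v; subst a.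
case/orP: v_NR => [v0 | /existsP[k]]; first by apply/imsetP; exists v; rewrite // inE vC.
rewrite inDiE => /eqP vk.
have [i] := exists_ord_notin (s := [:: k]) isT; rewrite inE => neq_ik.
have [w wC wi] := golay_pairJst i.
have : restrJ w + restrJ v \in NR C.
  rewrite -stab; apply: imset_f; apply/imsetP; exists w => //.
  by rewrite inE wC; apply/orP; right; apply/existsP; exists i; rewrite inDiE wi.
by rewrite (negbTE (restrJD_pairJst_notin_NR neq_ik vC wC vk wi)).
Qed.

End GolayCode.

Theorem lemma3p1 (C : {set 'rV['F_2]_24}) :
  is_golay C -> e8 \in C -> kerMu C = T_R C.
Proof.
move=> golayC e8C; apply/setP => -[a s]; rewrite !inE /inAutNR /mu /=.
case: (eqVneq s 1%g) => [-> | s_n1]; last first.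
  by rewrite andbF; apply/esym/negbTE/imsetP => -[a' _ [_ s1]]; rewrite s1 eqxx in s_n1.
have -> : [set Defs.act (a, 1%g) x | x in NR C] = [set x + a | x in NR C].
  by apply: eq_imset => x; rewrite /Defs.act col_perm1.
rewrite andbT NR_translate_stable //.
by apply/idP/imsetP => [aRM | [a' a'RM [->]]]; first exists a.
Qed.
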